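(* Let $d \geq 2$ and let $k, j, \ell \in \mathbb{Z}^d \setminus \{0\}$. If $|k| - |j| + |\ell| \neq 0$, then \[ \Big| \frac{1}{|k| - |j| + |\ell|} \Big| \leq C\, |j|^2 |\ell| . \] If $|k| - |j| - |\ell| \neq 0$, then \[ \Big| \frac{1}{|k| - |j| - |\ell|} \Big| \leq C\, |j|\, |\ell|\, (|j| + |\ell|). \] Here $C$ is a universal constant; $C = 27$ suffices.
   Context: $|\cdot|$ denotes the Euclidean norm on $\mathbb{Z}^d \subset \mathbb{R}^d$. *)

From mathcomp Require Import all_boot all_order all_algebra.
From mathcomp Require Import reals.
Set Implicit Arguments. Unset Strict Implicit. Unset Printing Implicit Defensive.
Import Order.TTheory GRing.Theory Num.Theory.
Local Open Scope ring_scope.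

Definition enorm (R : realType) (d : nat) (v : 'rV[int]_d) : R :=
  Num.sqrt (\sum_(i < d) ((v 0 i)%:~R : R) ^+ 2).

From mathcomp Require Import all_boot all_order all_algebra reals ring lra.
Set Implicit Arguments. Unset Strict Implicit. Unset Printing Implicit Defensive.
Import Order.TTheory GRing.Theory Num.Theory.
Local Open Scope ring_scope.

(* The norms x = |k|, y = |j|, z = |l| of nonzero lattice vectors are reals
   >= 1 whose squares are integers.  For such numbers the quantity
   s = x - y + z is a difference p - q with p = x + z, q = y, and
   (p - q)(p + q) = p^2 - q^2 = w + r where w = |k|^2 + |l|^2 - |j|^2 is an
   integer and r = 2xz >= 0 has integer square.  The key arithmetic fact
   (lemma [int_add_sqrt_lower]) is that a nonzero number w + r of this shape
   cannot be too small: |w + r| (1 + 2r) >= 1, because either w - r = 0 and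
   then r is a positive integer, or (w + r)(w - r) = w^2 - r^2 is a nonzero
   integer while |w - r| <= |w + r| + 2r.  This gives |s| (p + q)(1 + 2r) >= 1
   ([gap_lower]).  When |s| >= 1 the claimed bounds are trivial; when |s| < 1
   we get x <= y, hence (p + q)(1 + 2r) <= 3y * 5yz = 15 y^2 z.  The case
   s = x - y - z is identical with p = y + z, q = x, r = 2yz, and the bound
   3(y + z) * 5yz. *)

Section IntegerGaps.
Variable R : realType.

Lemma int_norm_ge1 (z : int) : z != 0 -> 1 <= `|z%:~R : R|.
Proof.
move=> z0; rewrite -intr_norm -[1]/(1%:~R : R) ler_int.
by rewrite -gtz0_ge1 normr_gt0.
Qed.

Lemma int_add_sqrt_lower (w m : int) (r : R) :
  0 <= r -> r ^+ 2 = m%:~R -> w%:~R + r != 0 -> 1 <= `|w%:~R + r| * (1 + 2 * r).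
Proof.
move=> r0 rm nz.
have [conj0 | conjN0] := eqVneq (w%:~R - r) 0.
  have rw : r = w%:~R by apply/eqP; rewrite eq_sym -subr_eq0 conj0.
  have w0 : w != 0 by apply: contraNneq nz => w0; rewrite rw w0 mulr0z addr0.
  have r1 : 1 <= r by rewrite -(ger0_norm r0) rw int_norm_ge1.
  have -> : w%:~R + r = 2 * r by rewrite rw; ring.
  rewrite ger0_norm; nra.
have prod_int : (w%:~R + r) * (w%:~R - r) = (w ^+ 2 - m)%:~R :> R.
  by rewrite rmorphB rmorphXn /= -rm; ring.
have prod_ge1 : 1 <= `|w%:~R + r| * `|w%:~R - r|.
  rewrite -normrM prod_int int_norm_ge1 // -(intr_eq0 R) -prod_int.
  exact: mulf_neq0.
have conj_le : `|w%:~R - r| <= `|w%:~R + r| + 2 * r.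
  have -> : w%:~R - r = (w%:~R + r) - 2 * r :> R by ring.
  apply: le_trans (ler_normB _ _) _.
  by rewrite (@ger0_norm _ (2 * r)) //; lra.
have := normr_ge0 (w%:~R + r : R); have := normr_ge0 (w%:~R - r : R).
move: prod_ge1 conj_le; set A := `|w%:~R + r|; set B := `|w%:~R - r|.
move=> AB BA B0 A0; have [A1 | A1] := lerP 1 A; nra.
Qed.

Lemma gap_lower (p q r : R) (w m : int) :
  0 <= p -> 0 <= q -> 0 <= r -> r ^+ 2 = m%:~R ->
  p ^+ 2 - q ^+ 2 = w%:~R + r -> p - q != 0 ->
  1 <= `|p - q| * ((p + q) * (1 + 2 * r)).
Proof.
move=> p0 q0 r0 rm sq_diff pq.
have pq_pos : 0 < p + q.
  rewrite lt_def addr_ge0 // andbT paddr_eq0 //.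
  by apply: contra pq => /andP[/eqP-> /eqP->]; rewrite subr0.
have fact : (p - q) * (p + q) = w%:~R + r by rewrite -sq_diff; ring.
rewrite mulrA -(ger0_norm (ltW pq_pos)) -normrM fact.
apply: int_add_sqrt_lower rm _ => //.
by rewrite -fact mulf_neq0 // gt_eqF.
Qed.

(* Converting a lower bound on |s| into an upper bound on |1/s|: the bound B
   only has to dominate M when |s| < 1, since otherwise |1/s| <= 1 <= B. *)
Lemma inv_le_of_gap (s M B : R) :
  s != 0 -> 1 <= `|s| * M -> (`|s| < 1 -> M <= B) -> 1 <= B -> `|s^-1| <= B.
Proof.
move=> s0 sM small B1; rewrite normfV.
have s_pos : 0 < `|s| by rewrite normr_gt0.
have [s1 | s1] := lerP 1 `|s|; first by apply: le_trans B1; rewrite invf_le1.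
rewrite -div1r ler_pdivrMr //; apply: le_trans sM _.
by rewrite mulrC ler_wpM2r // ?small // ltW.
Qed.

Lemma recip_gap_plus (x y z : R) (a b c : int) :
  1 <= x -> 1 <= y -> 1 <= z ->
  x ^+ 2 = a%:~R -> y ^+ 2 = b%:~R -> z ^+ 2 = c%:~R ->
  x - y + z != 0 -> `|(x - y + z)^-1| <= 15 * y ^+ 2 * z.
Proof.
move=> x1 y1 z1 xa yb zc s0.
have r_sq : (2 * x * z) ^+ 2 = (4 * a * c)%:~R :> R.
  by rewrite !rmorphM /= -xa -zc; ring.
have sq_diff : (x + z) ^+ 2 - y ^+ 2 = (a + c - b)%:~R + 2 * x * z.
  by rewrite !rmorphD rmorphN /= -xa -yb -zc; ring.
have lower : 1 <= `|x - y + z| * ((x + z + y) * (1 + 2 * (2 * x * z))).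
  rewrite addrAC in s0 *.
  by apply: (gap_lower _ _ _ r_sq sq_diff s0); [lra | lra | nra].
apply: inv_le_of_gap s0 lower _ _; last nra.
rewrite ltr_norml => /andP[_ s1].
have xy : x <= y by lra.
have sum_le : x + z + y <= 3 * y by lra.
have fac_le : 1 + 2 * (2 * x * z) <= 5 * (y * z) by nra.
have : (x + z + y) * (1 + 2 * (2 * x * z)) <= 3 * y * (5 * (y * z)).
  by apply: ler_pM => //; nra.
nra.
Qed.

Lemma recip_gap_minus (x y z : R) (a b c : int) :
  1 <= x -> 1 <= y -> 1 <= z ->
  x ^+ 2 = a%:~R -> y ^+ 2 = b%:~R -> z ^+ 2 = c%:~R ->
  x - y - z != 0 -> `|(x - y - z)^-1| <= 15 * y * z * (y + z).
Proof.
move=> x1 y1 z1 xa yb zc s0.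
have r_sq : (2 * y * z) ^+ 2 = (4 * b * c)%:~R :> R.
  by rewrite !rmorphM /= -yb -zc; ring.
have sq_diff : (y + z) ^+ 2 - x ^+ 2 = (b + c - a)%:~R + 2 * y * z.
  by rewrite !rmorphD rmorphN /= -xa -yb -zc; ring.
have lower : 1 <= `|x - y - z| * ((y + z + x) * (1 + 2 * (2 * y * z))).
  have flip : x - y - z = - (y + z - x) by ring.
  have s0' : y + z - x != 0 by rewrite -oppr_eq0 -flip.
  rewrite flip normrN.
  by apply: (gap_lower _ _ _ r_sq sq_diff s0'); [lra | lra | nra].
apply: inv_le_of_gap s0 lower _ _; last nra.
rewrite ltr_norml => /andP[_ s1].
have sum_le : y + z + x <= 3 * (y + z) by lra.
have fac_le : 1 + 2 * (2 * y * z) <= 5 * (y * z) by nra.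
have : (y + z + x) * (1 + 2 * (2 * y * z)) <= 3 * (y + z) * (5 * (y * z)).
  by apply: ler_pM => //; nra.
nra.
Qed.

End IntegerGaps.

Definition sqnorm (d : nat) (v : 'rV[int]_d) : int := \sum_(i < d) v 0 i ^+ 2.

Lemma enorm_sqr (R : realType) (d : nat) (v : 'rV[int]_d) :
  enorm R v ^+ 2 = (sqnorm v)%:~R.
Proof.
rewrite /enorm /sqnorm rmorph_sum sqr_sqrtr; last first.
  by apply: sumr_ge0 => i _; exact: sqr_ge0.
by apply: eq_bigr => i _; rewrite rmorphXn.
Qed.

Lemma enorm_ge1 (R : realType) (d : nat) (v : 'rV[int]_d) :
  v != 0 -> 1 <= enorm R v.
Proof.
move=> v0.
have [i vi] : exists i, v 0 i != 0.
  apply/existsP; apply: contraNT v0; rewrite negb_exists => /forallP vi0.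
  by apply/eqP/matrixP => r t; rewrite ord1 mxE; exact/eqP/negPn/vi0.
have vi1 : 1 <= ((v 0 i)%:~R : R) ^+ 2.
  by rewrite -real_normK ?num_real // expr_ge1 // int_norm_ge1.
have rest0 : 0 <= \sum_(t < d | t != i) ((v 0 t)%:~R : R) ^+ 2.
  by apply: sumr_ge0 => ? _; exact: sqr_ge0.
rewrite /enorm -[X in X <= _]sqrtr1 ler_sqrt; last by apply: sumr_ge0 => ? _; exact: sqr_ge0.
by rewrite (bigD1 i) //; apply: (le_trans vi1); rewrite lerDl.
Qed.

Theorem lemma5p3 (R : realType) (d : nat) (hd : (2 <= d)%N)
    (k j l : 'rV[int]_d) (hk : k != 0) (hj : j != 0) (hl : l != 0) :
  (enorm R k - enorm R j + enorm R l != 0 ->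
     `|(enorm R k - enorm R j + enorm R l)^-1|
       <= 27 * enorm R j ^+ 2 * enorm R l) /\
  (enorm R k - enorm R j - enorm R l != 0 ->
     `|(enorm R k - enorm R j - enorm R l)^-1|
       <= 27 * enorm R j * enorm R l * (enorm R j + enorm R l)).
Proof.
have k1 := enorm_ge1 R hk; have j1 := enorm_ge1 R hj; have l1 := enorm_ge1 R hl.
move: (enorm_sqr R k) (enorm_sqr R j) (enorm_sqr R l) k1 j1 l1.
move: (enorm R k) (enorm R j) (enorm R l) => x y z kk jj ll x1 y1 z1.
have y0 : 0 <= y := le_trans ler01 y1; have z0 : 0 <= z := le_trans ler01 z1.
split.
- move=> s0; apply: (le_trans (recip_gap_plus x1 y1 z1 kk jj ll s0)).
  by rewrite -!mulrA ler_wpM2r ?ler_nat // !mulr_ge0.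
- move=> s0; apply: (le_trans (recip_gap_minus x1 y1 z1 kk jj ll s0)).
  by rewrite -!mulrA ler_wpM2r ?ler_nat // !mulr_ge0 // addr_ge0.
Qed.
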